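(* Let $\Gamma=(W,F,\succ_W,\succ_F)$ be a matching market and let $T=(V,E,W)$ be a technology tree in which every worker $w\in W$ is a specialist. If the firms have unit-demand preferences over $T$, then the firms' demand type $\mathcal{D}=\bigcup_{f\in F}\mathcal{D}_f$ is totally unimodular.
   Context: A matching market: finite firms $F$, finite workers $W$, each firm $f\in F$ has a strict, complete, transitive preference $\succ_f$ over $2^W$, and workers have preferences over firms (irrelevant here). The choice function $Ch_f(S)$ is the $\succ_f$-best subset of $S$. For $S\subseteq W$, $ind(S)\in\{0,1\}^W$ is its indicator vector. The demand type of $f$ is $\mathcal{D}_f=\{\mathbf d\in\{-1,0,1\}^W:\mathbf d\neq \mathbf 0,\ \mathbf d=ind(Ch_f(S))-ind(Ch_f(S'))\text{ for some }S'\subsetneq S\subseteq W\}$; $\mathcal D=\bigcup_{f\in F}\mathcal D_f$. A set of vectors is totally unimodular if the matrix with these vectors as columns has every square submatrix of determinant $0$ or $\pm1$. A technology tree $T=(V,E,W)$ is a directed rooted tree $(V,E)$ with root $v_0$, all edges pointing away from the root, together with a set $W^v\subseteq W$ for each vertex $v$, such that $W^{v_0}=\emptyset$ and for each edge $e$ from $v$ to $v'$, $W^v\subsetneq W^{v'}$; put $W^e=W^{v'}\setminus W^v$. A worker $w$ is a specialist in $T$ if $|\{e\in E: w\in W^e\}|=1$. Firms have unit-demand preferences over $T$ if for every $f\in F$ and $S\subseteq W$, $S\succ_f\emptyset$ implies $S=W^v$ for some $v\in V$. *)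

From HB Require Import structures.
From mathcomp Require Import all_boot all_order all_algebra.
Set Implicit Arguments. Unset Strict Implicit. Unset Printing Implicit Defensive.
Import Order.TTheory GRing.Theory Num.Theory.
Local Open Scope ring_scope.

Definition strict_total_order (T : finType) (r : rel T) : Prop :=
  [/\ (forall x, ~~ r x x),
      (forall x y z, r x y -> r y z -> r x z) &
      (forall x y, x != y -> r x y || r y x)].

(* Ch_f(S): the pref-best subset of S (set0 as a dummy default, never used
   when pref is a strict total order). *)
Definition Ch (W : finType) (pref : rel {set W}) (S : {set W}) : {set W} :=
  odflt set0 [pick C : {set W} | (C \subset S) &&
     [forall C' : {set W}, ((C' \subset S) && (C' != C)) ==> pref C C']].

Definition ind (W : finType) (S : {set W}) : {ffun W -> int} :=
  [ffun w => ((w \in S) : nat)%:Z].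

Definition demand_type (W : finType) (pref : rel {set W}) (d : {ffun W -> int}) : Prop :=
  [/\ (forall w, d w \in [:: -1; 0; 1]), d != 0 &
      exists S S' : {set W}, S' \proper S /\
        d = [ffun w => ind (Ch pref S) w - ind (Ch pref S') w]].

Definition demand_type_all (W F : finType) (pref : F -> rel {set W})
  (d : {ffun W -> int}) : Prop := exists f : F, demand_type (pref f) d.

Definition totally_unimodular (W : finType) (D : {ffun W -> int} -> Prop) : Prop :=
  forall (k : nat) (r : 'I_k -> W) (c : 'I_k -> {ffun W -> int}),
    injective r -> injective c -> (forall j, D (c j)) ->
    \det (\matrix_(i < k, j < k) c j (r i)) \in [:: 0; 1; -1].

(* (V,E) is a directed rooted tree with root v0, edges pointing away from
   the root (an arborescence): no edge enters the root, every other vertex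
   has exactly one incoming edge, and every vertex is reachable from v0. *)
Definition rooted_tree (V : finType) (E : rel V) (v0 : V) : Prop :=
  [/\ (forall v, ~~ E v v0),
      (forall v, v != v0 -> #|[set u | E u v]| = 1%N) &
      (forall v, connect E v0 v)].

Definition technology_tree (V W : finType) (E : rel V) (v0 : V)
  (Wv : V -> {set W}) : Prop :=
  [/\ rooted_tree E v0, Wv v0 = set0 &
      (forall v v', E v v' -> Wv v \proper Wv v')].

Definition Wedge (V W : finType) (Wv : V -> {set W}) (e : V * V) : {set W} :=
  Wv e.2 :\: Wv e.1.

Definition specialist (V W : finType) (E : rel V) (Wv : V -> {set W}) (w : W) : Prop :=
  #|[set e : V * V | E e.1 e.2 && (w \in Wedge Wv e)]| = 1%N.

Definition unit_demand (V W F : finType) (pref : F -> rel {set W})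
  (Wv : V -> {set W}) : Prop :=
  forall (f : F) (S : {set W}), pref f S set0 -> exists v : V, S = Wv v.

From mathcomp Require Import all_boot all_order all_algebra.
From mathcomp Require Import ring zify.
Set Implicit Arguments. Unset Strict Implicit. Unset Printing Implicit Defensive.
Import Order.TTheory GRing.Theory Num.Theory.
Local Open Scope ring_scope.

(* A unit-demand firm only ever chooses sets W^v, so every demand vector is
   ind(W^x) - ind(W^y) for two vertices x, y.  A specialist w belongs to W^v
   exactly when v lies in the subtree below the head of the unique edge
   hiring w; hence row w of any square submatrix reads [x_j in L_w] -
   [y_j in L_w] for a subtree L_w, and subtrees form a laminar family.  Such
   "cut matrices" of a laminar family are totally unimodular: subtracting from
   the row of L_a the row of a largest proper subset L_b preserves the
   determinant and laminarity while shrinking the family, until it becomes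
   disjoint; then either some column has a single nonzero entry (expand along
   it) or all column sums vanish. *)

Lemma sign3M (a b : int) :
  a \in [:: 0; 1; -1] -> b \in [:: 0; 1; -1] -> a * b \in [:: 0; 1; -1].
Proof. by rewrite !inE => /or3P[]/eqP-> /or3P[]/eqP->. Qed.

Lemma signr_sign3 n : (-1) ^+ n \in [:: 0; 1; -1 :> int].
Proof. by rewrite -signr_odd; case: odd. Qed.

Section Determinants.

Variable R : comPzRingType.

Lemma det_col_sum0 n (A : 'M[R]_n.+1) : (forall j, \sum_i A i j = 0) -> \det A = 0.
Proof.
move=> col_sum0.
have sumA0 : const_mx 1 *m A = 0 :> 'rV_n.+1.
  apply/rowP => j; rewrite !mxE -[RHS](col_sum0 j); apply: eq_bigr => i _.
  by rewrite mxE mul1r.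
have := congr1 (mulmx^~ (\adj A)) sumA0.
rewrite -mulmxA mul_mx_adj mul0mx mul_mx_scalar => /rowP/(_ 0).
by rewrite !mxE mulr1.
Qed.

Lemma expand_det_col1 n (A : 'M[R]_n.+1) i0 j :
  (forall i, i != i0 -> A i j = 0) -> \det A = A i0 j * cofactor A i0 j.
Proof.
move=> col_j0; rewrite (expand_det_col A j) (bigD1 i0) //= big1 ?addr0 // => i.
by move/col_j0->; rewrite mul0r.
Qed.

Lemma det_sub_row n (A B : 'M[R]_n) i a : i != a ->
  row a B = row a A - row i A -> row' a B = row' a A -> \det B = \det A.
Proof.
move=> ia rowB row'B.
pose C := \matrix_(r, c) (if r == a then A i c else A r c).
have detC : \det C = 0.
  by apply: (determinant_alternate ia) => c; rewrite !mxE eqxx (negbTE ia).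
have rowC : row a C = row i A by apply/rowP => c; rewrite !mxE eqxx.
have row'C : row' a C = row' a A.
  by apply/matrixP => r c; rewrite !mxE eq_sym (negbTE (neq_lift _ _)).
rewrite (determinant_multilinear (B := A) (C := C) (i0 := a) (b := 1) (c := -1)).
- by rewrite detC mulr0 addr0 mul1r.
- by rewrite rowC scale1r scaleN1r.
- by rewrite row'B.
- by rewrite row'C row'B.
Qed.

End Determinants.

Lemma fconnect_comparable (T : finType) (f : T -> T) x y z :
  fconnect f x y -> fconnect f x z -> fconnect f y z || fconnect f z y.
Proof.
move=> /iter_findex <- /iter_findex <-.
case: (leqP (findex f x y) (findex f x z)) => [le_yz | /ltnW le_zy].
  by rewrite -(subnK le_yz) iterD fconnect_iter.
by rewrite -(subnK le_zy) iterD fconnect_iter orbT.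
Qed.

Section CutMatrix.

Variable T : finType.

Definition cut_mx k (L : 'I_k -> {set T}) (u v : 'I_k -> T) : 'M[int]_k :=
  \matrix_(i, j) (((u j \in L i) : nat)%:Z - ((v j \in L i) : nat)%:Z).

Definition laminar k (L : 'I_k -> {set T}) :=
  forall i j, [|| L i \subset L j, L j \subset L i | [disjoint L i & L j]].

Lemma cut_mx_sign3 k (L : 'I_k -> {set T}) u v i j :
  cut_mx L u v i j \in [:: 0; 1; -1].
Proof. by rewrite mxE; case: (u j \in L i); case: (v j \in L i). Qed.

Lemma cut_mx_minor k (L : 'I_k.+1 -> {set T}) u v i0 j0 :
  row' i0 (col' j0 (cut_mx L u v)) =
    cut_mx (L \o lift i0) (u \o lift j0) (v \o lift j0).
Proof. by apply/matrixP => i j; rewrite !mxE. Qed.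

Section DisjointFamily.

Variables (k : nat) (L : 'I_k -> {set T}).
Hypothesis disjL : forall i j, i != j -> [disjoint L i & L j].

Lemma notin_disjoint_family x i0 i : x \in L i0 -> i != i0 -> x \notin L i.
Proof. by move=> xi0 ii0; rewrite (disjointFl (disjL ii0) xi0). Qed.

Lemma sum_mem_disjoint_family x :
  \sum_i ((x \in L i) : nat)%:Z = ([exists i, x \in L i] : nat)%:Z.
Proof.
case: existsP => [[i0 xi0]|xNL].
  rewrite (bigD1 i0) //= xi0 big1 ?addr0 // => i ii0.
  by rewrite (negbTE (notin_disjoint_family xi0 ii0)).
by rewrite big1 // => i _; case: (boolP (x \in L i)) => // xi; case: xNL; exists i.
Qed.

End DisjointFamily.

Lemma det_cut_mx_disjoint k (L : 'I_k -> {set T}) u v :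
  (forall i j, i != j -> [disjoint L i & L j]) ->
  \det (cut_mx L u v) \in [:: 0; 1; -1].
Proof.
elim: k L u v => [|k IHk] L u v disjL; first by rewrite det_mx00 !inE.
pose covered x := [exists i, x \in L i].
have [/existsP[j cov_j] | /existsPn cov_eq] :=
  boolP [exists j, covered (u j) != covered (v j)].
  have [i0 off_i0] : exists i0, forall i, i != i0 -> cut_mx L u v i j = 0.
    move: cov_j; rewrite /covered.
    case: existsP => [[i0 ui0]|uNL]; case: existsP => [[i1 vi1]|vNL] // _.
      exists i0 => i ii0; rewrite mxE (negbTE (notin_disjoint_family disjL ui0 ii0)).
      by case: (boolP (v j \in L i)) => // vi; case: vNL; exists i.
    exists i1 => i ii1; rewrite mxE (negbTE (notin_disjoint_family disjL vi1 ii1)).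
    by case: (boolP (u j \in L i)) => // ui; case: uNL; exists i.
  rewrite (expand_det_col1 off_i0) /cofactor cut_mx_minor.
  rewrite sign3M ?cut_mx_sign3 // sign3M ?signr_sign3 // IHk // => i i' ii'.
  by apply: disjL; rewrite (inj_eq lift_inj).
apply/eqP; rewrite det_col_sum0 ?inE // => j.
under eq_bigr do rewrite mxE.
rewrite sumrB !sum_mem_disjoint_family // -/(covered (u j)) -/(covered (v j)).
by move/negPn/eqP: (cov_eq j) => ->; rewrite subrr.
Qed.

Lemma det_cut_mx_setD k (L : 'I_k -> {set T}) u v a b :
  b != a -> L b \subset L a ->
  \det (cut_mx [eta L with a |-> L a :\: L b] u v) = \det (cut_mx L u v).
Proof.
move=> ba sub_ba; apply: (det_sub_row ba).
  apply/rowP => j; rewrite !mxE /= eqxx !inE.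
  case: (boolP (u j \in L b)) => [/(subsetP sub_ba)-> | _];
  case: (boolP (v j \in L b)) => [/(subsetP sub_ba)-> | _] /=; ring.
by apply/matrixP => i j; rewrite !mxE /= eq_sym (negbTE (neq_lift _ _)).
Qed.

Lemma laminar_setD k (L : 'I_k -> {set T}) a b :
  laminar L -> L b \proper L a ->
  (forall c, L c \proper L a -> #|L c| <= #|L b|)%N ->
  laminar [eta L with a |-> L a :\: L b].
Proof.
move=> lamL prop_ba max_b.
have comparable_setD d : d != a ->
    [|| L a :\: L b \subset L d, L d \subset L a :\: L b | [disjoint L a :\: L b & L d]].
  move=> da; case/or3P: (lamL d a) => [sub_da | sub_ad | disj_da].
  - case: (L d =P L a) => [-> | /eqP neq_da]; first by rewrite subsetDl.
    have prop_da : L d \proper L a by rewrite properEneq neq_da.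
    have [sub_db | disj_db] : L d \subset L b \/ [disjoint L d & L b].
      case/or3P: (lamL d b) => [| sub_bd |]; [by left | left | by right].
      by have /eqP-> : L b == L d by rewrite eqEcard sub_bd max_b.
      by rewrite (disjointWr sub_db) ?orbT // disjoints_subset subsetDr.
    by rewrite subsetD sub_da disj_db orbT.
  - by rewrite (subset_trans (subsetDl _ _) sub_ad).
  - by rewrite disjoint_sym in disj_da; rewrite (disjointWl (subsetDl _ _) disj_da) !orbT.
move=> c d /=; case: (eqVneq c a) => [_ | ca]; case: (eqVneq d a) => [_ | da].
- by rewrite subxx.
- exact: comparable_setD.
- by rewrite disjoint_sym orbCA; apply: comparable_setD.
- exact: lamL c d.
Qed.

Lemma sum_card_setD_lt k (L : 'I_k -> {set T}) a b :
  L b \subset L a -> L b != set0 ->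
  (\sum_i #|[eta L with a |-> L a :\: L b] i| < \sum_i #|L i|)%N.
Proof.
move=> sub_ba Lb0; rewrite (bigD1 a) // [X in (_ < X)%N](bigD1 a) //= eqxx.
rewrite (eq_bigr (fun c => #|L c|)) => [|c /negbTE-> //]; rewrite ltn_add2r.
rewrite cardsD (setIidPr sub_ba); have := subset_leq_card sub_ba.
by rewrite -card_gt0 in Lb0; lia.
Qed.

Lemma det_cut_mx_laminar k (L : 'I_k -> {set T}) u v :
  laminar L -> \det (cut_mx L u v) \in [:: 0; 1; -1].
Proof.
have [n] := ubnP (\sum_i #|L i|)%N; elim: n L => // n IHn L /ltnSE weightL lamL.
have [/existsP[i /existsP[a /and3P[ia sub_ia meet_ia]]] | no_overlap] :=
  boolP [exists i, exists a, [&& i != a, L i \subset L a & ~~ [disjoint L i & L a]]].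
  have Li0 : L i != set0 by move: meet_ia; rewrite -setI_eq0 (setIidPl sub_ia).
  have [eq_ia | neq_ia] := eqVneq (L i) (L a).
    by apply/eqP; rewrite (determinant_alternate ia) ?inE // => j; rewrite !mxE eq_ia.
  have prop_ia : L i \proper L a by rewrite properEneq neq_ia.
  case: (@arg_maxnP _ i (fun c => L c \proper L a) (fun c => #|L c|) prop_ia).
  move=> b prop_ba max_b; have sub_ba := proper_sub prop_ba.
  have ba : b != a by apply: contraTneq prop_ba => ->; rewrite properxx.
  rewrite -(det_cut_mx_setD u v ba sub_ba); apply: IHn; last exact: laminar_setD.
  apply: leq_trans weightL; apply: sum_card_setD_lt sub_ba _.
  by rewrite -card_gt0 (leq_trans _ (max_b i prop_ia)) // card_gt0.
apply: det_cut_mx_disjoint => i a ia; move/existsPn: no_overlap => no_overlap.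
case/or3P: (lamL i a) => [sub_ia | sub_ai | //].
  by move/existsPn: (no_overlap i) => /(_ a); rewrite ia sub_ia negbK.
move/existsPn: (no_overlap a) => /(_ i); rewrite eq_sym ia sub_ai negbK /=.
by rewrite disjoint_sym.
Qed.

Lemma laminar_fconnect k (f : T -> T) (q : 'I_k -> T) :
  laminar (fun i => [set x | fconnect f x (q i)]).
Proof.
move=> i j /=; apply/or3P.
have [disj | ] := boolP [disjoint [set x | fconnect f x (q i)] & [set x | fconnect f x (q j)]].
  exact: Or33.
rewrite -setI_eq0 => /set0Pn[x]; rewrite !inE => /andP[xi xj].
case/orP: (fconnect_comparable xi xj) => [ij | ji]; [apply: Or31 | apply: Or32];
  by apply/subsetP => y; rewrite !inE => /connect_trans; apply.
Qed.

End CutMatrix.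

Section RootedTree.

Variables (V : finType) (E : rel V) (v0 : V).
Hypothesis rooted : rooted_tree E v0.

Definition parent (x : V) : V := odflt x [pick u | E u x].

Lemma parent_edge x : x != v0 -> E (parent x) x.
Proof.
case: rooted => _ indeg1 _ xv0; rewrite /parent; case: pickP => [u //|noE].
have := indeg1 x xv0; suff -> : [set u | E u x] = set0 by rewrite cards0.
by apply/setP => u; rewrite !inE noE.
Qed.

Lemma parent_root : parent v0 = v0.
Proof.
case: rooted => noE_v0 _ _; rewrite /parent.
by case: pickP => [u|//]; rewrite (negbTE (noE_v0 u)).
Qed.

End RootedTree.

Section TechnologyTree.

Variables (V W : finType) (E : rel V) (v0 : V) (Wv : V -> {set W}).
Hypothesis tree : technology_tree E v0 Wv.

Lemma Wv_parent_proper x : x != v0 -> Wv (parent E x) \proper Wv x.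
Proof. by case: tree => rooted _ Wv_edge /(parent_edge rooted); apply: Wv_edge. Qed.

Lemma Wv_parent_sub x : Wv (parent E x) \subset Wv x.
Proof.
have [->|xv0] := eqVneq x v0; last exact/proper_sub/Wv_parent_proper.
by case: tree => rooted _ _; rewrite parent_root.
Qed.

Lemma Wv_fconnect_sub x y : fconnect (parent E) x y -> Wv y \subset Wv x.
Proof.
move/iter_findex <-; elim: (findex _ x y) => [|n IHn] /=; first exact: subxx.
exact: subset_trans (Wv_parent_sub _) IHn.
Qed.

Lemma mem_Wv_specialist w : specialist E Wv w ->
  exists q, forall x, (w \in Wv x) = fconnect (parent E) x q.
Proof.
case: tree => rooted Wv0 _ /eqP/cards1P[e edge_w].
have /andP[_ w_e] : E e.1 e.2 && (w \in Wedge Wv e).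
  by move/setP/(_ e): edge_w; rewrite !inE eqxx.
have edge_w_uniq e' : E e'.1 e'.2 -> w \in Wedge Wv e' -> e' = e.
  by move=> Ee' w_e'; apply/set1P; rewrite -edge_w inE Ee' w_e'.
exists e.2 => x; apply/idP/idP; last first.
  by move/Wv_fconnect_sub/subsetP; apply; move: w_e; rewrite inE => /andP[].
have [n] := ubnP #|Wv x|; elim: n x => // n IHn x /ltnSE size_x wx.
have xv0 : x != v0 by apply: contraTneq wx => ->; rewrite Wv0 inE.
have [w_par | wN_par] := boolP (w \in Wv (parent E x)).
  apply: connect_trans (fconnect1 _ x) (IHn _ _ w_par).
  exact: leq_trans (proper_card (Wv_parent_proper xv0)) size_x.
have -> // : x = e.2.
by rewrite -(edge_w_uniq (parent E x, x)) ?(parent_edge rooted) // inE wN_par wx.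
Qed.

End TechnologyTree.

Section UnitDemand.

Variables (V W F : finType) (pref : F -> rel {set W}) (Wv : V -> {set W}) (v0 : V).
Hypotheses (unit_pref : unit_demand pref Wv) (Wv0 : Wv v0 = set0).

(* Whatever [Ch] returns is empty or preferred to the empty set, so no
   property of the preference order is needed. *)
Lemma Ch_unit_demand f S : exists v, Ch (pref f) S = Wv v.
Proof.
rewrite /Ch; case: pickP => [C /andP[_ /forallP C_best] | _] /=; last by exists v0.
have [->| C0] := eqVneq C set0; first by exists v0.
by apply: (unit_pref (f := f)); move: (C_best set0); rewrite sub0set eq_sym C0.
Qed.

Lemma demand_type_unit_demand f d : demand_type (pref f) d ->
  exists p : V * V, d = [ffun w => ind (Wv p.1) w - ind (Wv p.2) w].
Proof.
case=> _ _ [S [S' [_ ->]]].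
have [x ->] := Ch_unit_demand f S; have [y ->] := Ch_unit_demand f S'.
by exists (x, y).
Qed.

End UnitDemand.

Theorem theorem2 (W F V : finType) (pref : F -> rel {set W})
  (E : rel V) (v0 : V) (Wv : V -> {set W}) :
  (forall f : F, strict_total_order (pref f)) ->
  technology_tree E v0 Wv ->
  (forall w : W, specialist E Wv w) ->
  unit_demand pref Wv ->
  totally_unimodular (demand_type_all pref).
Proof.
move=> _ tree specialists unit_pref k r c _ _ demand_c.
have [_ Wv0 _] := tree.
have /fin_all_exists[p col_p] : forall j, exists p : V * V,
    c j = [ffun w => ind (Wv p.1) w - ind (Wv p.2) w].
  by move=> j; have [f] := demand_c j; apply: (demand_type_unit_demand unit_pref Wv0).
have /fin_all_exists[q row_q] : forall i, exists q,
    forall x, (r i \in Wv x) = fconnect (parent E) x q.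
  by move=> i; exact: (mem_Wv_specialist tree (specialists (r i))).
suff -> : \matrix_(i < k, j < k) c j (r i) =
    cut_mx (fun i => [set x | fconnect (parent E) x (q i)])
           (fun j => (p j).1) (fun j => (p j).2).
  exact/det_cut_mx_laminar/laminar_fconnect.
by apply/matrixP => i j; rewrite !mxE col_p !ffunE !inE -!row_q.
Qed.
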